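(* Let $\Phi_{\vec p}=\sum_{k,l}p_{kl}U_{kl}\otimes\overline{U}_{kl}$ be a Weyl channel lying in the simplex spanned by $\Phi_{X^k}=X^k\otimes\overline{X^k}$, $k=0,\dots,N-1$ (i.e. $p_{kl}=0$ whenever $l\neq0$), and let $T(\Phi_{\vec p})=\sum_{k}q_kX^k$ with $q_k=\sum_lp_{kl}$. Then the set of eigenvalues of the superoperator $\Phi_{\vec p}$ equals the spectrum of $T(\Phi_{\vec p})$; moreover the spectrum of $\Phi_{\vec p}$ is $N$-fold degenerate: its eigenvalues $\lambda_{mn}=\sum_{k,l}\omega^{ml-nk}p_{kl}$ satisfy $\lambda_{mn}=\xi_n$ for all $m$, where $\xi_n=\sum_k\omega^{-nk}q_k$, $n=0,\dots,N-1$, are the eigenvalues of $T(\Phi_{\vec p})$.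
   Context: Let $N\ge2$, $\omega=e^{2\pi i/N}$, $X|j\rangle=|j\oplus1\rangle$ (addition mod $N$), $Z=\mathrm{diag}(1,\omega,\dots,\omega^{N-1})$, Weyl unitaries $U_{kl}=X^kZ^l$, $k,l\in\{0,\dots,N-1\}$. Maps on $N\times N$ matrices are identified with superoperators ($N^2\times N^2$ matrices) acting on $|A\rangle\rangle=\sum A_{ij}|i\rangle|j\rangle$, so $\rho\mapsto K\rho K^\dagger$ corresponds to $K\otimes\overline{K}$. A Weyl channel is $\Phi_{\vec p}=\sum_{k,l}p_{kl}U_{kl}\otimes\overline{U}_{kl}$ with $(p_{kl})$ a probability vector. *)

From HB Require Import structures.
From mathcomp Require Import all_boot all_order all_algebra.
From mathcomp Require Import reals trigo.
From mathcomp Require Import complex mxtens.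

Set Implicit Arguments. Unset Strict Implicit. Unset Printing Implicit Defensive.
Import Order.TTheory GRing.Theory Num.Theory.
Local Open Scope ring_scope.
Local Open Scope complex_scope.

Section Weyl.
Variables (R : realType) (N : nat).
Local Notation C := R[i].

Definition omega : C := Complex (cos (2 * pi / N%:R)) (sin (2 * pi / N%:R)).

(* k-th power of a square matrix (mulmx iterated; works for any size N) *)
Definition mxpow (A : 'M[C]_N) (k : nat) : 'M[C]_N := iter k (mulmx A) 1%:M.

Definition Xmx : 'M[C]_N := \matrix_(i, j) ((val i == (val j + 1) %% N)%N)%:R.

Definition Zmx : 'M[C]_N := \matrix_(i, j) ((i == j)%:R * omega ^+ val i).

Definition Ukl (k l : 'I_N) : 'M[C]_N := mxpow Xmx k *m mxpow Zmx l.

(* superoperator of rho |-> K rho K^dagger : K (x) conj(K),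
   acting on |A>> = sum A_ij |i>|j> (index i*N+j, as in mxtens) *)
Definition superop (K : 'M[C]_N) : 'M[C]_(N * N) := K *t map_mx Num.conj K.

Definition weyl_channel (p : 'I_N -> 'I_N -> R) : 'M[C]_(N * N) :=
  \sum_(k < N) \sum_(l < N) (p k l)%:C *: superop (Ukl k l).

Definition qvec (p : 'I_N -> 'I_N -> R) (k : 'I_N) : R := \sum_(l < N) p k l.

Definition Tmap (p : 'I_N -> 'I_N -> R) : 'M[C]_N :=
  \sum_(k < N) (qvec p k)%:C *: mxpow Xmx k.

Definition lam (p : 'I_N -> 'I_N -> R) (m n : 'I_N) : C :=
  \sum_(k < N) \sum_(l < N)
     omega ^ ((val m * val l)%:Z - (val n * val k)%:Z) * (p k l)%:C.

Definition xi (p : 'I_N -> 'I_N -> R) (n : 'I_N) : C :=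
  \sum_(k < N) omega ^ (- (val n * val k)%:Z) * (qvec p k)%:C.

Definition prob_vec (p : 'I_N -> 'I_N -> R) : Prop :=
  (forall k l, 0 <= p k l) /\ \sum_(k < N) \sum_(l < N) p k l = 1.

End Weyl.

From HB Require Import structures.
From mathcomp Require Import all_boot all_order all_algebra.
From mathcomp Require Import reals trigo complex mxtens.
From mathcomp Require Import ring lra.
Import Order.TTheory GRing.Theory Num.Theory.
Local Open Scope ring_scope.

Set Implicit Arguments. Unset Strict Implicit. Unset Printing Implicit Defensive.

(* The Fourier matrix F = (nu^(ij)) of a primitive N-th root of unity nu
   diagonalises the cyclic shift X, F X = diag(nu^i) F.  Hence the circulant
   sum_k c_k X^k has eigenvalues sum_k c_k nu^(ik), and F (x) F diagonalises
   sum_k c_k X^k (x) X^k with eigenvalues sum_k c_k nu^((a+b)k); for fixed a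
   these are the previous ones permuted by b |-> a + b mod N, so the
   characteristic polynomial of the latter is the N-th power of that of the
   former.  A Weyl channel supported on the shifts has exactly this form,
   because X is real, and nu = omega^-1 yields the eigenvalues xi_n. *)

Lemma similar_char_poly (K : fieldType) n (P A B : 'M[K]_n) :
  P \in unitmx -> P *m A = B *m P -> char_poly A = char_poly B.
Proof.
move=> P_unit PA_BP.
have PcA : map_mx polyC P *m char_poly_mx A = char_poly_mx B *m map_mx polyC P.
  rewrite /char_poly_mx mulmxBr mulmxBl -map_mxM PA_BP map_mxM.
  by rewrite mul_mx_scalar mul_scalar_mx.
have detP : \det (map_mx polyC P) != 0.
  by rewrite det_map_mx polyC_eq0 -unitfE -unitmxE.
by apply: (mulIf detP); rewrite mulrC -!det_mulmx PcA.
Qed.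

Lemma char_poly_codiag (K : fieldType) n (I : finType) (c : I -> K)
    (P : 'M[K]_n) (A D : I -> 'M[K]_n) :
    P \in unitmx -> (forall k, P *m A k = D k *m P) ->
    (forall k, is_diag_mx (D k)) ->
  char_poly (\sum_k c k *: A k) = \prod_i ('X - (\sum_k c k * D k i i)%:P).
Proof.
move=> P_unit PA_DP D_diag.
have DP : P *m (\sum_k c k *: A k) = (\sum_k c k *: D k) *m P.
  rewrite mulmx_sumr mulmx_suml; apply: eq_bigr => k _.
  by rewrite -scalemxAr PA_DP scalemxAl.
rewrite (similar_char_poly P_unit DP) char_poly_trig.
  by apply: eq_bigr => i _; rewrite summxE; under eq_bigr do rewrite mxE.
apply/is_diag_mx_is_trig/is_diag_mxP => i j ij.
rewrite summxE big1 // => k _.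
by rewrite mxE; move/is_diag_mxP: (D_diag k) => -> //; rewrite mulr0.
Qed.

Lemma is_diag_tensmx (R : comPzRingType) m n (A : 'M[R]_m) (B : 'M[R]_n) :
  is_diag_mx A -> is_diag_mx B -> is_diag_mx (A *t B).
Proof.
move=> /is_diag_mxP A_diag /is_diag_mxP B_diag; apply/is_diag_mxP => I J.
case: (mxtens_indexP I) => a b; case: (mxtens_indexP J) => c d.
rewrite tensmxE; have [-> | ac] := eqVneq a c; last by rewrite A_diag ?mul0r.
have [-> | bd] := eqVneq b d; first by rewrite eqxx.
by rewrite B_diag ?mulr0.
Qed.

Lemma big_mxtens_index (R : Type) (idx : R) (op : Monoid.com_law idx) m n
    (F : 'I_(m * n) -> R) :
  \big[op/idx]_(i < m * n) F i
    = \big[op/idx]_(a < m) \big[op/idx]_(b < n) F (mxtens_index (a, b)).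
Proof.
rewrite pair_big (reindex (@mxtens_index m n)) /=.
  by apply: eq_big => // -[].
by exists (@mxtens_unindex m n) => x _;
  [apply: mxtens_indexK | apply: mxtens_unindexK].
Qed.

Definition shift_mx (K : pzSemiRingType) n : 'M[K]_n :=
  \matrix_(i, j) ((val i == (val j + 1) %% n)%N)%:R.

Lemma map_shift_mx (K L : pzSemiRingType) (f : {rmorphism K -> L}) n :
  map_mx f (shift_mx K n) = shift_mx L n.
Proof. by apply/matrixP => i j; rewrite !mxE rmorph_nat. Qed.

Section Circulant.
Variables (K : fieldType) (n : nat) (nu : K).
Hypothesis nu_prim : n.+1.-primitive_root nu.
Local Notation N := n.+1.

Definition fourier_mx : 'M[K]_N := \matrix_(i, j) nu ^+ (i * j).

Lemma fourier_mx_unit : fourier_mx \in unitmx.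
Proof.
have -> : fourier_mx = Vandermonde N (\row_j nu ^+ j).
  by apply/matrixP => i j; rewrite !mxE -exprM mulnC.
rewrite unitmxE det_Vandermonde unitfE; apply/prodf_neq0 => i _.
apply/prodf_neq0 => j ij; rewrite !mxE subr_eq0 (eq_prim_root_expr nu_prim).
by rewrite !modn_small // neq_ltn ij orbT.
Qed.

Lemma fourier_shift :
  fourier_mx *m shift_mx K N = diag_mx (\row_i nu ^+ i) *m fourier_mx.
Proof.
apply/matrixP => i j; rewrite mul_diag_mx !mxE.
have jN : ((j + 1) %% N < N)%N by rewrite ltn_mod.
rewrite (bigD1 (Ordinal jN)) //= big1 ?addr0 => [|l /eqP lj]; last first.
  rewrite !mxE; case: eqP => [jl|]; last by rewrite mulr0.
  by case: lj; apply: val_inj.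
rewrite !mxE eqxx mulr1 -(prim_expr_mod nu_prim) modnMmr prim_expr_mod //.
by rewrite mulnDr muln1 addnC exprD.
Qed.

Lemma fourier_shiftX k :
  fourier_mx *m shift_mx K N ^+ k = diag_mx (\row_i nu ^+ (i * k)) *m fourier_mx.
Proof.
elim: k => [|k IHk].
  rewrite expr0 mulmx1 -[LHS]mul1mx; congr (_ *m _).
  by apply/matrixP => i j; rewrite !mxE muln0.
rewrite exprSr -mulmxE mulmxA IHk -mulmxA fourier_shift.
rewrite mulmxA mulmx_diag; congr (diag_mx _ *m _).
by apply/rowP => i; rewrite !mxE -exprD mulnS addnC.
Qed.

Lemma char_poly_circulant (c : 'I_N -> K) :
  char_poly (\sum_k c k *: shift_mx K N ^+ k)
    = \prod_(i < N) ('X - (\sum_k c k * nu ^+ (i * k))%:P).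
Proof.
rewrite (char_poly_codiag c fourier_mx_unit (fun k : 'I_N => fourier_shiftX k)).
  by apply: eq_bigr => i _; under eq_bigr do rewrite !mxE eqxx mulr1n.
by move=> k; apply: diag_mx_is_diag.
Qed.

Lemma char_poly_circulant_tens (c : 'I_N -> K) :
  char_poly (\sum_k c k *: (shift_mx K N ^+ k *t shift_mx K N ^+ k))
    = char_poly (\sum_k c k *: shift_mx K N ^+ k) ^+ N.
Proof.
pose D (k : 'I_N) := diag_mx (\row_i nu ^+ (i * k)) : 'M[K]_N.
have FFS (k : 'I_N) :
    (fourier_mx *t fourier_mx) *m (shift_mx K N ^+ k *t shift_mx K N ^+ k)
      = (D k *t D k) *m (fourier_mx *t fourier_mx).
  by rewrite !tensmx_mul fourier_shiftX.
have FF_unit : fourier_mx *t fourier_mx \in unitmx.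
  by apply: tensmx_unit; rewrite ?fourier_mx_unit.
rewrite (char_poly_codiag c FF_unit FFS); last first.
  by move=> k; apply: is_diag_tensmx; apply: diag_mx_is_diag.
rewrite char_poly_circulant -[X in _ ^+ X](card_ord N) -prodr_const big_mxtens_index.
apply: eq_bigr => a _; rewrite [RHS](reindex_inj (addrI a)); apply: eq_bigr => b _.
under eq_bigr do rewrite tensmxE !mxE !eqxx !mulr1n -exprD -mulnDl.
congr ('X - _%:P); apply: eq_bigr => k _.
by rewrite !exprM /= (prim_expr_mod nu_prim).
Qed.
End Circulant.

Section RootOfUnity.
Variables (R : realType) (N : nat).
Hypothesis N_gt0 : (0 < N)%N.
Local Notation theta := (2 * pi / N%:R : R).

Lemma omegaX k : omega R N ^+ k = Complex (cos (k%:R * theta)) (sin (k%:R * theta)).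
Proof.
elim: k => [|k IHk]; first by rewrite expr0 mul0r cos0 sin0.
rewrite exprS IHk /omega; set th := theta. (* keeps [mulrDl] off [2 * pi] *)
rewrite -addn1 natrD mulrDl mul1r cosD sinD.
by apply/eqP; rewrite eq_complex /=; apply/andP; split; apply/eqP; ring.
Qed.

Lemma omega_expN : omega R N ^+ N = 1.
Proof.
rewrite omegaX mulrCA mulfV ?mulr1 ?pnatr_eq0 -?lt0n //.
by rewrite mulr_natl cos2pi sin2pi.
Qed.

Lemma omega_exp_neq1 d : (0 < d < N)%N -> omega R N ^+ d != 1.
Proof.
case/andP => d_gt0 dN; rewrite omegaX eq_complex /= negb_and; apply/orP; left.
pose x : R := pi * d%:R / N%:R.
have -> : d%:R * theta = x *+ 2 by rewrite /x -mulr_natl; field; rewrite pnatr_eq0 -lt0n.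
have sin_x_gt0 : 0 < sin x.
  apply: sin_gt0_pi; rewrite divr_gt0 ?mulr_gt0 ?pi_gt0 ?ltr0n //=.
  by rewrite ltr_pdivrMr ?ltr0n // ltr_pM2l ?pi_gt0 // ltr_nat.
by rewrite cos_mulr2n cos2sin2; apply/eqP => cos_eq1; nra.
Qed.

Lemma omega_prim : N.-primitive_root (omega R N).
Proof.
have [m m_prim m_dvdN] := prim_order_exists N_gt0 omega_expN.
have m_gt0 := prim_order_gt0 m_prim.
suff mN : m = N by move: m_prim; rewrite mN.
apply/eqP; rewrite eqn_leq dvdn_leq //= leqNgt; apply/negP => mN.
move: (@omega_exp_neq1 m); rewrite m_gt0 mN (prim_expr_order m_prim) eqxx.
by move/(_ isT).
Qed.

Lemma omegaV_prim : N.-primitive_root (omega R N)^-1.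
Proof.
have omega_neq0 : omega R N != 0 by rewrite (prim_root_eq0 omega_prim) -lt0n.
have -> : (omega R N)^-1 = omega R N ^+ N.-1.
  apply: (mulIf omega_neq0); rewrite mulVf // -exprSr prednK //.
  by rewrite omega_expN.
by rewrite (prim_root_exp_coprime _ omega_prim) coprimePn.
Qed.

End RootOfUnity.

Lemma mxpowE (R : realType) n (A : 'M[R[i]]_n.+1) k : mxpow A k = A ^+ k.
Proof. by elim: k => [|k IHk] //; rewrite exprS -IHk. Qed.

Section ShiftChannel.
Variables (R : realType) (n : nat) (p : 'I_n.+1 -> 'I_n.+1 -> R).
Local Notation N := n.+1.
Local Notation X := (shift_mx R[i] N).
Local Open Scope complex_scope.

Lemma XmxE : Xmx R N = X.
Proof. by []. Qed.

Lemma Tmap_circulant : Tmap p = \sum_k (qvec p k)%:C *: X ^+ k.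
Proof. by apply: eq_bigr => k _; rewrite mxpowE XmxE. Qed.

Lemma xi_omegaV m : xi p m = \sum_k (qvec p k)%:C * (omega R N)^-1 ^+ (m * k).
Proof. by apply: eq_bigr => k _; rewrite mulrC -invr_expz exprVn. Qed.

Hypothesis p_shift : forall k l : 'I_N, (val l != 0)%N -> p k l = 0.

Lemma qvec_shift k : qvec p k = p k ord0.
Proof. by rewrite /qvec (bigD1 ord0) //= big1 ?addr0 // => l /p_shift->. Qed.

Lemma lam_shift m m' : lam p m m' = xi p m'.
Proof.
apply: eq_bigr => k _; rewrite (bigD1 ord0) //= big1 ?addr0 => [|l /p_shift->].
  by rewrite qvec_shift muln0 sub0r.
by rewrite mulr0.
Qed.

Lemma weyl_channel_shift :
  weyl_channel p = \sum_k (qvec p k)%:C *: (X ^+ k *t X ^+ k).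
Proof.
apply: eq_bigr => k _; rewrite (bigD1 ord0) //= big1 ?addr0 => [|l /p_shift->].
  rewrite qvec_shift /superop /Ukl !mxpowE expr0 mulmxE mulr1 XmxE.
  by rewrite rmorphXn /= map_shift_mx.
by rewrite scale0r.
Qed.
End ShiftChannel.

Theorem proposition3 (R : realType) (N : nat) (p : 'I_N -> 'I_N -> R) :
  (1 < N)%N ->
  prob_vec p ->
  (forall k l : 'I_N, (val l != 0)%N -> p k l = 0) ->
  [/\ (forall a : R[i], eigenvalue (weyl_channel p) a = eigenvalue (Tmap p) a),
      char_poly (weyl_channel p)
        = \prod_(m < N) \prod_(n < N) ('X - (lam p m n)%:P),
      char_poly (Tmap p) = \prod_(n < N) ('X - (xi p n)%:P)
    & forall m n : 'I_N, lam p m n = xi p n].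
Proof.
case: N p => [|[|n]] // p _ _ p_shift.
have nu_prim := @omegaV_prim R n.+2 isT.
have char_T : char_poly (Tmap p) = \prod_(m < n.+2) ('X - (xi p m)%:P).
  rewrite Tmap_circulant (char_poly_circulant nu_prim).
  by under [RHS]eq_bigr do rewrite xi_omegaV.
have char_Phi : char_poly (weyl_channel p) = char_poly (Tmap p) ^+ n.+2.
  rewrite (weyl_channel_shift p_shift) Tmap_circulant.
  exact: (char_poly_circulant_tens nu_prim).
split=> [a | | // | m m']; last exact: lam_shift.
  by rewrite !eigenvalue_root_char char_Phi rootE horner_exp expf_eq0 -rootE.
rewrite char_Phi char_T -[X in _ ^+ X](card_ord n.+2) -prodr_const.
by apply: eq_bigr => m _; apply: eq_bigr => m' _; rewrite lam_shift.
Qed.
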